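(* Let $\mathcal{L}$ be a Lindbladian on $\mathbb{C}^d$, and let $\mathcal{S}=\{\mathcal{E}_1,\dots,\mathcal{E}_k\}$ be a finite set of linearly independent quantum channels on operators on $\mathbb{C}^d$. Suppose that (1) the identity map $\mathcal{I}$ lies in the convex hull $\mathrm{conv}[\mathcal{S}]$, and (2) there is a $k\times k$ $Q$-matrix $Q=(q_{ij})$ such that $\mathcal{L}\circ\mathcal{E}_i=\sum_{j=1}^k q_{ji}\,\mathcal{E}_j$ for every $i$. Then the dynamical semigroup $\Phi_t=e^{t\mathcal{L}}$ satisfies $\Phi_t\in\mathrm{conv}[\mathcal{S}]$ for all $t\ge0$.
   Context: A Lindbladian has GKSL form and generates the CPTP semigroup $(e^{t\mathcal{L}})_{t\ge0}$. A $k\times k$ $Q$-matrix (reversed transition-rate matrix) is a real matrix $Q=(q_{ij})$ with $q_{ij}\ge0$ for all $i\neq j$, finite diagonal entries, and each column summing to zero: $\sum_{i}q_{ij}=0$ for every $j$ (so $q_{jj}=-\sum_{i\neq j}q_{ij}\le0$). *)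

From HB Require Import structures.
From mathcomp Require Import all_boot all_order all_algebra.
From mathcomp Require Import complex.
From mathcomp Require Import all_classical all_reals topology normedtype sequences.
Set Implicit Arguments. Unset Strict Implicit. Unset Printing Implicit Defensive.
Import Order.TTheory GRing.Theory Num.Theory.
Import numFieldNormedType.Exports.
Local Open Scope ring_scope.
Local Open Scope complex_scope.
Local Open Scope classical_set_scope.

Section QDefs.
Variable R : realType.
Local Notation C := R[i].

Definition sop (d : nat) := 'M[C]_d -> 'M[C]_d.

Definition adj (d : nat) (A : 'M[C]_d) : 'M[C]_d := (map_mx (@conjc R) A)^T.

Definition lindbladian (d : nat) (L : sop d) : Prop :=
  exists H : 'M[C]_d, adj H = H /\
  exists (m : nat) (V : 'I_m -> 'M[C]_d), forall rho : 'M[C]_d,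
    L rho = (- Complex 0 1) *: (H *m rho - rho *m H)
            + \sum_(j < m) (V j *m rho *m adj (V j)
                 - 2%:R^-1 *: (adj (V j) *m V j *m rho + rho *m (adj (V j) *m V j))).

Definition psd (I : finType) (A : I -> I -> C) : Prop :=
  forall v : I -> C, 0 <= \sum_i \sum_j conjc (v i) * A i j * v j.

Definition linear_sop (d : nat) (E : sop d) : Prop :=
  forall (a : C) (x y : 'M[C]_d), E (a *: x + y) = a *: E x + E y.

(* complete positivity: id_n (x) E is positive for every n; an element of
   M_n (x) M_d is a block matrix X with blocks X p q : 'M_d. *)
Definition completely_positive (d : nat) (E : sop d) : Prop :=
  forall (n : nat) (X : 'I_n -> 'I_n -> 'M[C]_d),
    psd (fun p q : 'I_n * 'I_d => X p.1 q.1 p.2 q.2) ->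
    psd (fun p q : 'I_n * 'I_d => E (X p.1 q.1) p.2 q.2).

Definition trace_preserving (d : nat) (E : sop d) : Prop :=
  forall x : 'M[C]_d, \tr (E x) = \tr x.

Definition quantum_channel (d : nat) (E : sop d) : Prop :=
  [/\ linear_sop E, completely_positive E & trace_preserving E].

Definition lin_indep (d k : nat) (E : 'I_k -> sop d) : Prop :=
  forall c : 'I_k -> C, (forall x, \sum_(i < k) c i *: E i x = 0) -> forall i, c i = 0.

Definition in_conv (d k : nat) (E : 'I_k -> sop d) (F : sop d) : Prop :=
  exists lam : 'I_k -> R, [/\ forall i, 0 <= lam i, \sum_(i < k) lam i = 1 &
    forall x, F x = \sum_(i < k) (lam i)%:C *: E i x].

(* Q-matrix (reversed transition-rate matrix): off-diagonal >= 0, columns sum to 0 *)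
Definition Qmatrix (k : nat) (Q : 'M[R]_k) : Prop :=
  (forall i j : 'I_k, i != j -> 0 <= Q i j) /\ (forall j : 'I_k, \sum_(i < k) Q i j = 0).

Definition exp_partial (d : nat) (L : sop d) (t : R) (x : 'M[C]_d) (N : nat) : 'M[C]_d :=
  \sum_(n < N) ((t ^+ n / (n`!)%:R)%:C) *: iter n L x.

Definition is_exp_sop (d : nat) (L : sop d) (t : R) (Phi : sop d) : Prop :=
  forall (x : 'M[C]_d) (a b : 'I_d),
    (fun N => complex.Re (exp_partial L t x N a b)) @ \oo --> complex.Re (Phi x a b) /\
    (fun N => complex.Im (exp_partial L t x N a b)) @ \oo --> complex.Im (Phi x a b).

End QDefs.

From HB Require Import structures.
From mathcomp Require Import all_boot all_order all_algebra.
From mathcomp Require Import complex.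
From mathcomp Require Import all_classical all_reals topology normedtype sequences.
From mathcomp Require Import exp.
From mathcomp Require Import ring lra.

Set Implicit Arguments.
Unset Strict Implicit.
Unset Printing Implicit Defensive.
Import Order.TTheory GRing.Theory Num.Theory.
Import numFieldNormedType.Exports.
Local Open Scope ring_scope.
Local Open Scope complex_scope.
Local Open Scope classical_set_scope.

(* Write the identity as sum_j lam_j E_j.  The intertwining relation
   L o E_i = sum_j q_ji E_j gives L^m = sum_j (Q^m lam)_j E_j, hence
   e^{tL} = sum_j (e^{tQ} lam)_j E_j.  The weights e^{tQ} lam sum to 1 because
   the columns of Q sum to 0, and they are nonnegative because P := Q + cI is
   entrywise nonnegative for c large, so that e^{tQ} lam = e^{-ct} e^{tP} lam. *)

Section CauchyProduct.
Variable R : realType.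
Implicit Types a b s u v : R^nat.

Lemma series_le_norm_cvg u v :
  (forall n, `|u n| <= v n) -> cvgn (series v) -> cvgn (series u).
Proof.
move=> uv cv; apply: normed_cvg.
by apply: (series_le_cvg _ _ uv cv) => n //; exact: le_trans (uv n).
Qed.

Lemma series_cauchy_product a b s :
  (forall n, s n = \sum_(i < n.+1) a i * b (n - i)%N) ->
  forall N, series s N = \sum_(m < N) a m * series b (N - m)%N.
Proof.
move=> hs; elim=> [|N IH]; first by rewrite /series /= big_geq // big_ord0.
rewrite (seriesSr s N) IH hs big_ord_recr /= subnn [RHS]big_ord_recr /= subSnn.
rewrite [series b 1]/series /= big_nat1.
rewrite [X in _ = X + _](eq_bigr (fun m : 'I_N =>
  a m * series b (N - m)%N + a m * b (N - m)%N)) ?big_split -?addrA // => m _.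
by rewrite subSn 1?ltnW // seriesSr mulrDr.
Qed.

(* The partial sums of b are eventually positive and always bounded by some K,
   so series s (n + N0) >= - K * (series a (n + N0) - series a n) -> 0. *)
Lemma cauchy_product_lim_ge0 a b s :
  (forall n, 0 <= a n) -> cvgn (series a) ->
  cvgn (series b) -> 0 < limn (series b) ->
  (forall n, s n = \sum_(i < n.+1) a i * b (n - i)%N) ->
  cvgn (series s) -> 0 <= limn (series s).
Proof.
move=> a0 ca cb b_gt0 hs cs.
have [N0 _ hN0] := cvgr_ge _ cb _ b_gt0.
have [K _ hK] := pinfty_ex_gt0 (cvg_seq_bounded cb).
have low n : 0 <= series s (n + N0)%N + K * (series a (n + N0)%N - series a n).
  rewrite (series_cauchy_product hs).
  rewrite -(big_mkord xpredT (fun m => a m * series b (n + N0 - m)%N)).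
  rewrite (@big_cat_nat _ _ _ n) ?leq_addr //= sub_series_geq ?leq_addr //.
  rewrite -addrA; apply: addr_ge0.
    rewrite big_nat_cond; apply: sumr_ge0 => i /andP[/andP[_ hi] _].
    apply: mulr_ge0 (a0 i) (hN0 _ _) => /=.
    by rewrite -addnBAC; [exact: leq_addl | exact: ltnW].
  rewrite mulr_sumr -big_split; apply: sumr_ge0 => i _ /=.
  rewrite [K * _]mulrC -mulrDr mulr_ge0 // -lerBlDr sub0r.
  by have /= := hK (n + N0 - i)%N I; rewrite ler_norml => /andP[].
have shift (u : R^nat) : cvgn u -> (fun n => u (n + N0)%N) @ \oo --> limn u.
  by move=> cu; apply: cvg_comp cu; exact: cvg_addnr.
have lim_low : (fun n => series s (n + N0)%N
    + K * (series a (n + N0)%N - series a n)) @ \oo --> limn (series s).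
  rewrite -[X in _ --> X]addr0 -(mulr0 K) -(subrr (limn (series a))).
  by apply: cvgD; [exact: shift | apply: cvgMl_tmp; apply: cvgB; [exact: shift|]].
by apply: (ler_cvg_to (cvg_cst 0) lim_low); near=> n; exact: low.
Unshelve. all: by end_near.
Qed.

End CauchyProduct.

Section ExpmxVector.
Variables (R : realType) (n : nat).
Implicit Types (A Q : 'M[R]_n) (v w : 'cV[R]_n).

Lemma mulmx_pow_entry_le A v m j :
  `|(A ^+ m *m v) j 0| <= (\sum_i \sum_l `|A i l|) ^+ m * \sum_i `|v i 0|.
Proof.
set M := \sum_i \sum_l `|A i l|; set V := \sum_i `|v i 0|.
have V0 : 0 <= V by apply: sumr_ge0.
have M0 : 0 <= M by apply: sumr_ge0 => i _; apply: sumr_ge0.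
elim: m j => [|m IH] j.
  by rewrite expr0 mul1mx mul1r /V (bigD1 j) //= lerDl sumr_ge0.
rewrite exprS -mulmxA mxE; apply: le_trans (ler_norm_sum _ _ _) _.
apply: le_trans (_ : \sum_l `|A j l| * (M ^+ m * V) <= _).
  by apply: ler_sum => l _; rewrite normrM ler_wpM2l.
rewrite -mulr_suml exprS -mulrA ler_wpM2r ?mulr_ge0 ?exprn_ge0 //.
rewrite /M [leRHS](bigD1 j) //= lerDl.
by apply: sumr_ge0 => i _; apply: sumr_ge0.
Qed.

Lemma mulmx_pow_ge0 A v m j :
  (forall i l, 0 <= A i l) -> (forall i, 0 <= v i 0) -> 0 <= (A ^+ m *m v) j 0.
Proof.
move=> A0 v0; elim: m j => [|m IH] j; first by rewrite expr0 mul1mx.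
by rewrite exprS -mulmxA mxE sumr_ge0 // => i _; rewrite mulr_ge0.
Qed.

Lemma sum_mulmx_col0 Q w :
  (forall j, \sum_i Q i j = 0) -> \sum_i (Q *m w) i 0 = 0.
Proof.
move=> Q0; under eq_bigr do rewrite mxE.
by rewrite exchange_big big1 // => j _; rewrite -mulr_suml Q0 mul0r.
Qed.

Lemma mulmx_pow_shift Q v (c : R) m j :
  (Q ^+ m *m v) j 0 =
  \sum_(i < m.+1) ((- c) ^+ (m - i)%N * ((Q + c%:M) ^+ i *m v) j 0) *+ 'C(m, i).
Proof.
have eQ : Q = (- c)%:M + (Q + c%:M).
  by rewrite addrCA -raddfD /= addNr raddf0 addr0.
rewrite {1}eQ exprDn_comm; last by rewrite /GRing.comm -!mulmxE scalar_mxC.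
rewrite mulmx_suml summxE; apply: eq_bigr => i _.
by rewrite -rmorphXn -mulmxE mul_scalar_mx scalerMnl -scalemxAl mxE mulrnAl.
Qed.

Definition expmx_term (t : R) A v j m : R := t ^+ m / m`!%:R * (A ^+ m *m v) j 0.

Definition expmxv (t : R) A v j : R := limn (series (expmx_term t A v j)).

Lemma is_cvg_series_expmx_term t A v j : cvgn (series (expmx_term t A v j)).
Proof.
set M := \sum_i \sum_l `|A i l|; set V := \sum_i `|v i 0|.
apply: (@series_le_norm_cvg _ _ (fun m => V * exp_coeff (`|t| * M) m)) => [m|];
  last exact: (is_cvg_seriesZ (k := V) (is_cvg_series_exp_coeff _)).
rewrite /expmx_term /exp_coeff /= normrM normf_div normrX normr_nat.
apply: le_trans (_ : `|t| ^+ m / m`!%:R * (M ^+ m * V) <= _).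
  by rewrite ler_wpM2l ?divr_ge0 ?exprn_ge0 // mulmx_pow_entry_le.
by rewrite le_eqVlt exprMn; apply/orP; left; apply/eqP; ring.
Qed.

Lemma expmx_term_shift t Q v (c : R) j m :
  expmx_term t Q v j m =
  \sum_(i < m.+1) expmx_term t (Q + c%:M) v j i * exp_coeff (- (c * t)) (m - i)%N.
Proof.
rewrite /expmx_term (mulmx_pow_shift _ _ c) mulr_sumr; apply: eq_bigr => i _.
have im : (i <= m)%N by rewrite -ltnS.
rewrite /exp_coeff /= -mulr_natr -(bin_fact im) !natrM -mulNr exprMn.
rewrite -{1}(subnKC im) exprD.
have fi : (i`!%:R : R) != 0 by rewrite pnatr_eq0 -lt0n fact_gt0.
have fmi : ((m - i)%N`!%:R : R) != 0 by rewrite pnatr_eq0 -lt0n fact_gt0.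
have bin : ('C(m, i)%:R : R) != 0 by rewrite pnatr_eq0 -lt0n bin_gt0.
by field; rewrite fi fmi bin.
Qed.

Lemma sum_expmxv t Q v :
  (forall j, \sum_i Q i j = 0) -> \sum_j expmxv t Q v j = \sum_j v j 0.
Proof.
move=> Q0.
have sum_partial N : \sum_j series (expmx_term t Q v j) N.+1 = \sum_j v j 0.
  rewrite /series /=; under eq_bigr do rewrite big_nat_recl //.
  rewrite big_split /= [X in _ + X]exchange_big [X in _ + X]big1 ?addr0 => [|i _].
    by apply: eq_bigr => j _; rewrite /expmx_term expr0 fact0 divr1 mul1r mul1mx.
  by rewrite -mulr_sumr [Q ^+ _]exprS -mulmxA sum_mulmx_col0 ?mulr0.
have lim_sum : (fun N => \sum_j series (expmx_term t Q v j) N) @ \oo -->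
    \sum_j expmxv t Q v j.
  apply: cvg_big => [|j _]; first exact: add_continuous.
  exact: is_cvg_series_expmx_term.
rewrite -(cvg_lim _ lim_sum) //; apply: cvg_lim => //; apply: cvg_near_cst.
by exists 1%N => // -[|N] //= _; exact: sum_partial.
Qed.

Lemma expmxv_ge0 t Q v j :
  Qmatrix Q -> 0 <= t -> (forall i, 0 <= v i 0) -> 0 <= expmxv t Q v j.
Proof.
move=> [Qoff _] t0 v0; pose c := \sum_i `|Q i i|.
have P0 i l : 0 <= (Q + c%:M) i l.
  rewrite !mxE; have [<-|il] := eqVneq i l; last by rewrite mulr0n addr0 Qoff.
  have Qc : `|Q i i| <= c by rewrite /c (bigD1 i) //= lerDl sumr_ge0.
  by have := ler_norm (- Q i i); rewrite normrN mulr1n; lra.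
apply: (@cauchy_product_lim_ge0 _ (expmx_term t (Q + c%:M) v j)
          (exp_coeff (- (c * t)))).
- by move=> i; rewrite mulr_ge0 ?divr_ge0 ?exprn_ge0 ?mulmx_pow_ge0.
- exact: is_cvg_series_expmx_term.
- exact: is_cvg_series_exp_coeff.
- exact: expR_gt0.
- exact: expmx_term_shift.
- exact: is_cvg_series_expmx_term.
Qed.

End ExpmxVector.

Section Superoperators.
Variables (R : realType) (d : nat).
Local Notation C := R[i].

Lemma lindbladian_linear (L : sop R d) : lindbladian L -> linear_sop L.
Proof.
move=> [H [_ [m [V hV]]]] a x y; rewrite !hV.
have hamiltonian_part (A B : 'M[C]_d) : A *m (a *: x + y) - (a *: x + y) *m B =
    a *: (A *m x - x *m B) + (A *m y - y *m B).
  rewrite mulmxDr mulmxDl -scalemxAr -scalemxAl.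
  by rewrite opprD addrACA -scalerN -scalerDr.
have jump_part (A B W : 'M[C]_d) :
    A *m (a *: x + y) *m B - 2%:R^-1 *: (W *m (a *: x + y) + (a *: x + y) *m W) =
    a *: (A *m x *m B - 2%:R^-1 *: (W *m x + x *m W))
    + (A *m y *m B - 2%:R^-1 *: (W *m y + y *m W)).
  rewrite !mulmxDr !mulmxDl -!scalemxAr -!scalemxAl addrACA -scalerDr.
  rewrite [2%:R^-1 *: (_ + _)]scalerDr scalerA [_^-1 * a]mulrC -scalerA.
  by rewrite opprD addrACA -scalerN -scalerDr.
rewrite hamiltonian_part; under eq_bigr do rewrite jump_part.
rewrite big_split /= -scaler_sumr scalerDr scalerA (mulrC (- Complex 0 1) a).
by rewrite -scalerA addrACA -scalerDr.
Qed.

Lemma linear_sop_sum (L : sop R d) (I : Type) (r : seq I) (c : I -> C)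
    (F : I -> 'M[C]_d) :
  linear_sop L -> L (\sum_(i <- r) c i *: F i) = \sum_(i <- r) c i *: L (F i).
Proof.
move=> linL; have L0 : L 0 = 0.
  by have := linL (-1) 0 0; rewrite scaler0 addr0 scaleN1r addNr.
by apply: (big_rec2 (fun x y => L x = y)) => // i x y _ <-; exact: linL.
Qed.

Lemma cvg_ReIm_combination (k : nat) (F : nat -> 'M[C]_d) (c : 'I_k -> R^nat)
    (mu : 'I_k -> R) (M : 'I_k -> 'M[C]_d) (a b : 'I_d) :
  (forall N, F N = \sum_j (c j N)%:C *: M j) -> (forall j, c j @ \oo --> mu j) ->
  (fun N => complex.Re (F N a b)) @ \oo -->
    complex.Re ((\sum_j (mu j)%:C *: M j) a b) /\
  (fun N => complex.Im (F N a b)) @ \oo -->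
    complex.Im ((\sum_j (mu j)%:C *: M j) a b).
Proof.
move=> FE cmu.
suff fcvg (f : {additive Rcomplex R -> R}) :
    (forall r z, f (r%:C * z) = r * f z) ->
    (fun N => f (F N a b)) @ \oo --> f ((\sum_j (mu j)%:C *: M j) a b).
  by split; apply: fcvg => r [x y] /=; rewrite mul0r ?subr0 ?addr0.
move=> fM; have fE (r : 'I_k -> R) :
    f ((\sum_j (r j)%:C *: M j) a b) = \sum_j r j * f (M j a b).
  by rewrite summxE raddf_sum; apply: eq_bigr => j _; rewrite mxE fM.
under eq_fun do rewrite FE fE.
rewrite fE; apply: cvg_big => [|j _]; first exact: add_continuous.
exact: cvgMr_tmp.
Qed.

Section Dynamics.
Variables (k : nat) (L : sop R d) (E : 'I_k -> sop R d) (Q : 'M[R]_k).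
Hypothesis linL : linear_sop L.
Hypothesis LE : forall i x, L (E i x) = \sum_j (Q j i)%:C *: E j x.

Lemma iter_combination (v : 'cV[R]_k) x m :
  x = \sum_j (v j 0)%:C *: E j x ->
  iter m L x = \sum_j ((Q ^+ m *m v) j 0)%:C *: E j x.
Proof.
move=> xE; elim: m => [|m IH] /=; first by rewrite expr0 mul1mx -xE.
rewrite IH linear_sop_sum //; under [in LHS]eq_bigr do rewrite LE scaler_sumr.
rewrite exchange_big /=; apply: eq_bigr => i _.
rewrite exprS -mulmxA mxE rmorph_sum scaler_suml; apply: eq_bigr => j _.
by rewrite scalerA -rmorphM mulrC.
Qed.

Lemma exp_partial_combination (v : 'cV[R]_k) t x N :
  x = \sum_j (v j 0)%:C *: E j x ->
  exp_partial L t x N = \sum_j (series (expmx_term t Q v j) N)%:C *: E j x.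
Proof.
move=> xE; rewrite /exp_partial.
under eq_bigr do rewrite (iter_combination _ xE) scaler_sumr.
rewrite exchange_big; apply: eq_bigr => j _.
rewrite /series /= big_mkord rmorph_sum scaler_suml; apply: eq_bigr => m _.
by rewrite scalerA -rmorphM.
Qed.

End Dynamics.
End Superoperators.

Theorem lemma1 (R : realType) (d k : nat) (L : sop R d) (E : 'I_k -> sop R d)
  (Q : 'M[R]_k) :
  lindbladian L ->
  (forall i, quantum_channel (E i)) ->
  lin_indep E ->
  in_conv E id ->
  Qmatrix Q ->
  (forall (i : 'I_k) (x : 'M[R[i]]_d),
      L (E i x) = \sum_(j < k) (Q j i)%:C *: E j x) ->
  forall t : R, 0 <= t ->
    exists Phi : sop R d, is_exp_sop L t Phi /\ in_conv E Phi.
Proof.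
move=> /lindbladian_linear linL _ _ [lam [lam0 lam1 idE]] QQ LE t t0.
pose v : 'cV[R]_k := \col_i lam i.
have xE x : x = \sum_j (v j 0)%:C *: E j x.
  by apply: etrans (idE x) _; apply: eq_bigr => j _; rewrite mxE.
exists (fun x => \sum_j (expmxv t Q v j)%:C *: E j x); split.
  move=> x a b; apply: cvg_ReIm_combination => [N|j].
    exact: exp_partial_combination.
  exact: is_cvg_series_expmx_term.
exists (expmxv t Q v); split => // [j|].
  by apply: expmxv_ge0 => // i; rewrite mxE.
rewrite sum_expmxv; last by case: QQ.
by rewrite -lam1; apply: eq_bigr => j _; rewrite mxE.
Qed.
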